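(* Let $C<\infty$, let $(z_i)$ be a bimonotone basis of a Banach space, and let $(w_i)$ be a block basis of $(z_i)$ with $1\le\|w_i\|\le C$ for all $i$. Let $\mathcal{A}$ be the family of finite sets $F\subseteq\mathbb{N}$ such that $\|\sum_{i\in F}\pm w_i\|\le C$ for all choices of signs. Then there is a norm $|\cdot|$ on $[(w_i)]$ equivalent to the original norm such that $(w_i)$ is a normalized bimonotone basis for $|\cdot|$ and $|\sum_{i\in F}\pm w_i|=1$ for every $F\in\mathcal{A}$ and every choice of signs.
   Context: A basis is bimonotone if all its basis projections $P_{[m,n]}$ onto intervals of coordinates have norm at most $1$. $[(w_i)]$ denotes the closed linear span. *)

From HB Require Import structures.
From mathcomp Require Import all_boot all_order all_algebra.
From mathcomp Require Import finmap.
From mathcomp Require Import all_classical all_reals all_analysis.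
Set Implicit Arguments. Unset Strict Implicit. Unset Printing Implicit Defensive.
Import Order.TTheory GRing.Theory Num.Theory.
Import numFieldNormedType.Exports.
Local Open Scope classical_set_scope.
Local Open Scope ring_scope.

Definition series_to {R : realType} {V : normedModType R}
  (a : nat -> R) (z : nat -> V) (x : V) : Prop :=
  (fun n : nat => \sum_(i < n) a i *: z i) @ \oo --> x.

Definition is_basis {R : realType} {V : normedModType R} (z : nat -> V) : Prop :=
  forall x : V, exists! a : nat -> R, series_to a z x.

Definition bimonotone {R : realType} {V : normedModType R} (z : nat -> V) : Prop :=
  forall (x : V) (a : nat -> R), series_to a z x ->
  forall m n : nat, (m <= n)%N ->
    `| \sum_(m <= i < n.+1) a i *: z i | <= `|x|.

Definition block_basis_of {R : realType} {V : normedModType R}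
  (w z : nat -> V) : Prop :=
  exists (p : nat -> nat) (b : nat -> R),
    (forall i, (p i < p i.+1)%N) /\
    (forall i, w i = \sum_(p i <= j < p i.+1) b j *: z j) /\
    (forall i, w i != 0).

Definition closed_span {R : realType} {V : normedModType R} (w : nat -> V) : set V :=
  closure [set x | exists (n : nat) (a : nat -> R), x = \sum_(i < n) a i *: w i].

Definition signed_sum {R : realType} {V : normedModType R}
  (w : nat -> V) (F : {fset nat}) (s : nat -> bool) : V :=
  \sum_(i <- F) ((-1) ^+ s i : R) *: w i.

Definition is_norm_on {R : realType} {V : normedModType R}
  (W : set V) (N : V -> R) : Prop :=
  (forall x, W x -> 0 <= N x) /\
  (forall x, W x -> N x = 0 -> x = 0) /\
  (forall x y, W x -> W y -> N (x + y) <= N x + N y) /\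
  (forall (c : R) x, W x -> N (c *: x) = `|c| * N x).

Definition equiv_norm_on {R : realType} {V : normedModType R}
  (W : set V) (N : V -> R) : Prop :=
  exists c1 c2 : R, 0 < c1 /\ 0 < c2 /\
    forall x, W x -> c1 * `|x| <= N x /\ N x <= c2 * `|x|.

Definition series_to_N {R : realType} {V : normedModType R} (N : V -> R)
  (a : nat -> R) (z : nat -> V) (x : V) : Prop :=
  (fun n : nat => N (x - \sum_(i < n) a i *: z i)) @ \oo --> (0 : R).

From HB Require Import structures.
From mathcomp Require Import all_boot all_order all_algebra.
From mathcomp Require Import finmap.
From mathcomp Require Import all_classical all_reals all_analysis.
From mathcomp Require Import ring.
Import Order.TTheory GRing.Theory Num.Theory.
Import numFieldNormedType.Exports.
Local Open Scope classical_set_scope.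
Local Open Scope ring_scope.

(* Let P_[m,n) be the basis projections of (z_i) and p_i the first coordinate
   of the i-th block.  The new norm of x is the supremum of
   ||P_[p_i,p_k) x|| / C over all block intervals and of
   ||P_[p_i,p_i+1) x|| / ||w_i|| over single blocks.  Bimonotonicity of (z_i)
   makes it at most ||x||; on [(w_i)] every P_[p_i,p_i+1) x is a multiple of
   w_i, so the expansion of x along (w_i) is recovered from the block
   projections, and ||x|| <= C |x|.  Composing a block projection with another
   one gives a block projection, so (w_i) is bimonotone for |.|.  For F in the
   family A, a block interval projection of a signed sum over F is a signed
   sum over a subset of F, which has norm at most C because twice it is the
   sum of two signed sums over F; a single block of F contributes exactly 1. *)

Lemma closed_span_kernel {R : realType} {V W : normedModType R} {w : nat -> V}
    (f : {linear V -> W}) (K : R) :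
  0 < K -> (forall x, `|f x| <= K * `|x|) -> (forall i, f (w i) = 0) ->
  forall x, closed_span w x -> f x = 0.
Proof.
move=> K_gt0 fK fw0 x wx; apply/eqP; rewrite -normr_le0.
apply/ler_addgt0Pr => e e_gt0; rewrite add0r.
have [_ [[n [a ->]] /=]] := wx _ (nbhsx_ballx x (e / K) (divr_gt0 e_gt0 K_gt0)).
rewrite -ball_normE /= => xy.
have f_span : f (\sum_(i < n) a i *: w i) = 0.
  by rewrite linear_sum big1 // => i _; rewrite linearZ /= fw0 scaler0.
rewrite -[x](subrK (\sum_(i < n) a i *: w i)) linearD /= f_span addr0.
by rewrite (le_trans (fK _)) // -ler_pdivlMl // mulrC ltW.
Qed.

Lemma norm_signed_sum_mask {R : realType} {V : normedModType R} (w : nat -> V)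
    (C : R) (F : {fset nat}) (P : pred nat) :
  (forall s, `|signed_sum w F s| <= C) ->
  forall s, `|signed_sum (fun l => if P l then w l else 0) F s| <= C.
Proof.
move=> wC s; pose t l := if P l then s l else ~~ s l.
(* Off P the signs s and t are opposite and cancel; on P they agree. *)
have twice : 2 *: signed_sum (fun l => if P l then w l else 0) F s =
    signed_sum w F s + signed_sum w F t.
  rewrite /signed_sum scaler_sumr -big_split; apply: eq_bigr => l _ /=.
  rewrite /t; case: (P l); first by rewrite scaler_nat mulr2n.
  by case: (s l); rewrite /= !scaler0 ?expr0 ?expr1 ?scaleN1r scale1r ?addNr ?subrr.
have := ler_normD (signed_sum w F s) (signed_sum w F t).
rewrite -twice normrZ ger0_norm // => /le_trans/(_ (lerD (wC s) (wC t))).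
by rewrite -mulr2n -[C *+ 2]mulr_natl ler_pM2l.
Qed.

Section SchauderBasis.
Context {R : realType} {V : normedModType R} {z : nat -> V}.

Lemma series_to_linear c (a a' : nat -> R) x y :
  series_to a z x -> series_to a' z y ->
  series_to (fun i => c * a i + a' i) z (c *: x + y).
Proof.
move=> ax ay; rewrite /series_to.
have -> : (fun n => \sum_(i < n) (c * a i + a' i) *: z i) =
    (fun n => c *: \sum_(i < n) a i *: z i + \sum_(i < n) a' i *: z i).
  apply: funext => n; rewrite scaler_sumr -big_split /=.
  by apply: eq_bigr => i _; rewrite scalerDl scalerA.
exact: cvgD (cvgZr ax) ay.
Qed.

Hypothesis basis_z : is_basis z.

Definition coef (x : V) : nat -> R := projT1 (cid (basis_z x)).

Lemma coefP x : series_to (coef x) z x.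
Proof. exact: (projT2 (cid (basis_z x))).1. Qed.

Lemma coef_unique x a : series_to a z x -> coef x = a.
Proof. exact: (projT2 (cid (basis_z x))).2. Qed.

Lemma coef_inj : injective coef.
Proof. by move=> x y cxy; have := coefP y; rewrite -cxy; exact: cvg_unique (coefP x). Qed.

Lemma coef_linear c x y : coef (c *: x + y) = fun i => c * coef x i + coef y i.
Proof. by apply: coef_unique; apply: series_to_linear; apply: coefP. Qed.

Lemma coef_sum m n (c : nat -> R) :
  coef (\sum_(m <= j < n) c j *: z j) = fun j => if (m <= j < n)%N then c j else 0.
Proof.
apply: coef_unique; apply: cvg_near_cst; near=> k.
have nk : (n <= k)%N by near: k; apply: nbhs_infty_ge.
rewrite (big_nat_widenl _ 0) // (big_nat_widen _ _ k) // big_mkcond big_mkord.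
by apply: eq_bigr => j _; rewrite andbC; case: ifP; rewrite ?scale0r.
Unshelve. all: by end_near. Qed.

Lemma coef0 : coef 0 = fun=> 0.
Proof. by have := coef_sum 0 0 (fun=> 0); rewrite big_geq. Qed.

Lemma basis_neq0 j : z j != 0.
Proof.
apply/eqP => zj0; have := coef_sum j j.+1 (fun=> 1).
rewrite big_nat1 scale1r zj0 coef0 => /(congr1 (fun c => c j)).
by rewrite leqnn ltnSn => /esym/eqP; rewrite oner_eq0.
Qed.

Definition proj m n x := \sum_(m <= j < n) coef x j *: z j.

Lemma coef_proj m n x :
  coef (proj m n x) = fun j => if (m <= j < n)%N then coef x j else 0.
Proof. exact: coef_sum. Qed.

Lemma proj_is_linear m n : linear (proj m n).
Proof.
move=> c x y; rewrite /proj coef_linear scaler_sumr -big_split.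
by apply: eq_bigr => j _; rewrite scalerDl scalerA.
Qed.

HB.instance Definition _ m n :=
  GRing.isLinear.Build R V V *:%R (proj m n) (proj_is_linear m n).

Lemma proj_proj a b m n x : proj a b (proj m n x) = proj (maxn a m) (minn b n) x.
Proof.
apply: coef_inj; rewrite !coef_proj; apply: funext => j; rewrite geq_max leq_min.
by case: (a <= j)%N; case: (m <= j)%N; case: (j < b)%N; case: (j < n)%N.
Qed.

Lemma proj_cat a b c x : (a <= b <= c)%N -> proj a b x + proj b c x = proj a c x.
Proof. by case/andP=> ab bc; rewrite /proj -big_cat_nat. Qed.

Lemma proj_ge m n x : (n <= m)%N -> proj m n x = 0.
Proof. by move=> nm; rewrite /proj big_geq. Qed.

Lemma proj_nat1 j x : proj j j.+1 x = coef x j *: z j.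
Proof. by rewrite /proj big_nat1. Qed.

Lemma proj0_cvg x : (fun n => proj 0 n x) @ \oo --> x.
Proof.
have -> : (fun n => proj 0 n x) = fun n => \sum_(j < n) coef x j *: z j.
  by apply: funext => n; rewrite /proj big_mkord.
exact: coefP.
Qed.

Hypothesis bimonotone_z : bimonotone z.

Lemma norm_proj_le m n x : `|proj m n x| <= `|x|.
Proof.
case: n => [|n]; first by rewrite proj_ge // normr0.
have [mn|nm] := leqP m n; first exact: bimonotone_z (coefP x) _ _ mn.
by rewrite proj_ge // normr0.
Qed.

Lemma norm_coef_le j x : `|coef x j| * `|z j| <= `|x|.
Proof. by rewrite -normrZ -proj_nat1 norm_proj_le. Qed.

End SchauderBasis.

Section BlockBasis.
Context {R : realType} {V : normedModType R} {z w : nat -> V}.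
Context {p : nat -> nat} {b : nat -> R}.
Hypotheses (basis_z : is_basis z) (bimonotone_z : bimonotone z).
Hypothesis p_incr : forall i, (p i < p i.+1)%N.
Hypothesis w_def : forall i, w i = \sum_(p i <= j < p i.+1) b j *: z j.

Local Notation coef := (coef basis_z).
Local Notation proj := (proj basis_z).

Let leq_p : {mono p : m n / (m <= n)%N} := leq_mono (homo_ltn ltn_trans p_incr).
Let ltn_p : {mono p : m n / (m < n)%N} := leqW_mono leq_p.

Lemma leq_block_start n : (n <= p n)%N.
Proof. by elim: n => // n IHn; apply: leq_ltn_trans IHn (p_incr n). Qed.

Lemma block_support i : w i != 0 -> exists j, (p i <= j < p i.+1)%N /\ b j != 0.
Proof.
move=> wi_neq0; apply: contrapT => no_j; move: wi_neq0.
rewrite w_def big1_seq ?eqxx // => j /=; rewrite mem_index_iota => j_in.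
have [-> | bj_neq0] := eqVneq (b j) 0; first by rewrite scale0r.
by exfalso; apply: no_j; exists j.
Qed.

Lemma coef_block l : coef (w l) = fun j => if (p l <= j < p l.+1)%N then b j else 0.
Proof. by rewrite w_def coef_sum. Qed.

Lemma coef_block_at l i j : (p i <= j < p i.+1)%N -> coef (w l) j = if l == i then b j else 0.
Proof.
case/andP=> ij ji; rewrite coef_block; have [-> | li] := eqVneq l i; first by rewrite ij ji.
apply/ifF/negbTE; apply: contra li => /andP[lj jl].
by rewrite eqn_leq -ltnS -ltn_p (leq_ltn_trans lj ji) -ltnS -ltn_p (leq_ltn_trans ij jl).
Qed.

Lemma proj_block i k l : proj (p i) (p k) (w l) = if (i <= l < k)%N then w l else 0.
Proof.
apply: (coef_inj basis_z); rewrite coef_proj (fun_if coef) coef0 coef_block.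
apply: funext => j; have [/andP[lj jl] | jNl] := boolP (p l <= j < p l.+1)%N; last first.
  by rewrite if_same; case: (i <= l < k)%N; rewrite /= ?(negbTE jNl).
have -> : (p i <= j)%N = (i <= l)%N.
  apply/idP/idP => [ij | il]; first by rewrite -ltnS -ltn_p (leq_ltn_trans ij jl).
  by rewrite (leq_trans _ lj) ?leq_p.
have -> : (j < p k)%N = (l < k)%N.
  apply/idP/idP => [jk | lk]; first by rewrite -ltn_p (leq_ltn_trans lj jk).
  by rewrite (leq_trans jl) ?leq_p.
by case: ifP => //= _; rewrite lj jl.
Qed.

Lemma proj_block_sum (a : nat -> R) i n : (i < n)%N ->
  proj (p i) (p i.+1) (\sum_(l < n) a l *: w l) = a i *: w i.
Proof.
move=> i_lt_n; rewrite linear_sum.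
under eq_bigr => l _ do
  rewrite linearZ /= proj_block ltnS -eqn_leq eq_sym (fun_if ( *:%R (a l))) scaler0.
by rewrite -big_mkcond (big_ord1_eq _ (fun l => a l *: w l)) i_lt_n.
Qed.

Lemma proj_signed_sum i k F s : proj (p i) (p k) (signed_sum w F s) =
  signed_sum (fun l => if (i <= l < k)%N then w l else 0) F s.
Proof. by rewrite linear_sum; apply: eq_bigr => l _; rewrite linearZ /= proj_block. Qed.

Lemma proj_block_signed_sum i F s : proj (p i) (p i.+1) (signed_sum w F s) =
  if i \in F then (-1) ^+ s i *: w i else 0.
Proof.
rewrite proj_signed_sum /signed_sum.
under eq_bigr => l _ do rewrite ltnS -eqn_leq eq_sym (fun_if ( *:%R _)) scaler0.
rewrite -big_mkcond; case: ifP => iF.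
  by rewrite -big_filter filter_pred1_uniq ?fset_uniq // big_seq1.
rewrite big_seq_cond big1 // => l /andP[lF /eqP li].
by move: iF; rewrite -li lF.
Qed.

Lemma proj_telescope m n x : (m <= n)%N ->
  \sum_(m <= i < n) proj (p i) (p i.+1) x = proj (p m) (p n) x.
Proof.
elim: n => [|n IHn]; first by rewrite leqn0 => /eqP ->; rewrite big_geq // proj_ge.
rewrite leq_eqVlt => /predU1P [-> | mn]; first by rewrite big_geq // proj_ge.
by rewrite big_nat_recr //= IHn // proj_cat // !leq_p leqnSn andbT -ltnS.
Qed.

Lemma proj_head_cvg x : (fun n => proj 0 (p n) x) @ \oo --> x.
Proof.
have p_cvg : p @ \oo --> \oo.
  apply/cvgnyPge => A; near=> n; apply: leq_trans (leq_block_start n).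
  by near: n; apply: nbhs_infty_ge.
exact: cvg_comp p_cvg (proj0_cvg basis_z x).
Unshelve. all: by end_near. Qed.

Lemma proj_head_span x : closed_span w x -> proj 0 (p 0) x = 0.
Proof.
move: x; apply: (closed_span_kernel _ _ ltr01) => [y | l].
  by rewrite mul1r norm_proj_le.
have := proj_block l l.+1 l; rewrite leqnn ltnSn /= => <-.
by rewrite proj_proj proj_ge // max0n geq_min leq_p leq0n.
Qed.

Variable jj : nat -> nat.
Hypotheses (jj_block : forall i, (p i <= jj i < p i.+1)%N) (b_jj : forall i, b (jj i) != 0).

Lemma proj_block_span i x : closed_span w x ->
  proj (p i) (p i.+1) x = (coef x (jj i) / b (jj i)) *: w i.
Proof.
pose Q y := proj (p i) (p i.+1) y - (coef y (jj i) / b (jj i)) *: w i.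
have Q_linear : linear Q.
  move=> c u v; rewrite /Q linearP coef_linear /= mulrDl scalerDl -mulrA -scalerA.
  by rewrite opprD addrACA -scalerBr.
pose QL : {linear V -> V} := HB.pack Q (GRing.isLinear.Build _ _ _ _ Q Q_linear).
move=> wx; apply/eqP; rewrite -subr_eq0; apply/eqP.
have zj_gt0 : 0 < `|z (jj i)| by rewrite normr_gt0 basis_neq0.
have bj_gt0 : 0 < `|b (jj i)| by rewrite normr_gt0.
move: x wx; apply: (closed_span_kernel QL (1 + `|w i| / (`|b (jj i)| * `|z (jj i)|))).
- by rewrite ltr_pwDl // divr_ge0 // mulr_ge0 // ltW.
- move=> y; rewrite /= /Q mulrDl mul1r (le_trans (ler_normB _ _)) // lerD ?norm_proj_le //.
  have cy : `|coef y (jj i)| <= `|y| / `|z (jj i)| by rewrite ler_pdivlMr // norm_coef_le.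
  rewrite normrZ normrM normrV ?unitfE //.
  apply: le_trans (ler_wpM2r (normr_ge0 _) (ler_wpM2r _ cy)) _; first by rewrite invr_ge0.
  by rewrite le_eqVlt invfM; apply/orP; left; apply/eqP; ring.
- move=> l; rewrite /= /Q proj_block (coef_block_at _ _ _ (jj_block i)) ltnS -eqn_leq eq_sym.
  have [-> | _] := eqVneq l i; first by rewrite divff // scale1r subrr.
  by rewrite mul0r scale0r subrr.
Qed.

Lemma block_partial_sum x n : closed_span w x ->
  \sum_(i < n) (coef x (jj i) / b (jj i)) *: w i = proj 0 (p n) x.
Proof.
move=> wx; rewrite -(proj_cat _ _ (p 0)) ?leq_p //= proj_head_span // add0r.
rewrite -proj_telescope // big_mkord; apply: eq_bigr => i _.
by rewrite proj_block_span.
Qed.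

Variable C : R.
Hypotheses (C_ge1 : 1 <= C) (w_ge1 : forall i, 1 <= `|w i|).

Let C_gt0 : 0 < C := lt_le_trans ltr01 C_ge1.
Let w_gt0 i : 0 < `|w i| := lt_le_trans ltr01 (w_ge1 i).

Definition block_norm_set x : set R :=
  [set r | exists i k, r = `|proj (p i) (p k) x| / C] `|`
  [set r | exists i, r = `|proj (p i) (p i.+1) x| / `|w i|].

Definition block_norm x := sup (block_norm_set x).

Lemma block_norm_set_le x r : block_norm_set x r -> r <= `|x|.
Proof.
have le_div d m n : 1 <= d -> `|proj m n x| / d <= `|x|.
  move=> d_ge1; rewrite ler_pdivrMr ?(lt_le_trans ltr01) //.
  by rewrite (le_trans (norm_proj_le basis_z bimonotone_z _ _ _)) // ler_peMr.
by case=> [[i [k ->]] | [i ->]]; apply: le_div.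
Qed.

Lemma has_sup_block_norm_set x : has_sup (block_norm_set x).
Proof.
split; first by exists (`|proj (p 0) (p 0) x| / C); left; exists 0%N, 0%N.
by exists `|x|; apply: block_norm_set_le.
Qed.

Lemma block_norm_ub x r : block_norm_set x r -> r <= block_norm x.
Proof. exact/sup_upper_bound/has_sup_block_norm_set. Qed.

Lemma block_norm_lub x B : (forall r, block_norm_set x r -> r <= B) -> block_norm x <= B.
Proof. exact/ge_sup/(has_sup_block_norm_set x).1. Qed.

Lemma norm_proj_le_block_norm i k x : `|proj (p i) (p k) x| <= C * block_norm x.
Proof. by rewrite -ler_pdivrMl // mulrC; apply: block_norm_ub; left; exists i, k. Qed.

Lemma norm_proj_block_le i x : `|proj (p i) (p i.+1) x| <= `|w i| * block_norm x.
Proof. by rewrite -ler_pdivrMl // mulrC; apply: block_norm_ub; right; exists i. Qed.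

Lemma block_norm_ge0 x : 0 <= block_norm x.
Proof. by rewrite -(pmulr_rge0 _ C_gt0) (le_trans _ (norm_proj_le_block_norm 0 0 x)). Qed.

Lemma block_norm_le_norm x : block_norm x <= `|x|.
Proof. exact/block_norm_lub/block_norm_set_le. Qed.

Lemma block_normD x y : block_norm (x + y) <= block_norm x + block_norm y.
Proof.
apply: block_norm_lub => _ [[i [k ->]] | [i ->]]; rewrite linearD;
  (apply: le_trans (ler_wpM2r _ (ler_normD _ _)) _; first by rewrite invr_ge0 ltW);
  rewrite mulrDl lerD // block_norm_ub //.
- by left; exists i, k.
- by left; exists i, k.
- by right; exists i.
- by right; exists i.
Qed.

Lemma block_normZ_le c x : block_norm (c *: x) <= `|c| * block_norm x.
Proof.
apply: block_norm_lub => _ [[i [k ->]] | [i ->]];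
  rewrite linearZ normrZ -mulrA ler_wpM2l // block_norm_ub //.
- by left; exists i, k.
- by right; exists i.
Qed.

Lemma block_normZ c x : block_norm (c *: x) = `|c| * block_norm x.
Proof.
apply/eqP; rewrite eq_le block_normZ_le /=.
have [-> | c0] := eqVneq c 0; first by rewrite normr0 mul0r block_norm_ge0.
rewrite -ler_pdivlMl ?normr_gt0 // -normrV ?unitfE // -{1}(scalerK c0 x).
exact: block_normZ_le.
Qed.

Lemma block_norm_proj m k x : block_norm (proj (p m) (p k) x) <= block_norm x.
Proof.
have max_p i j : maxn (p i) (p j) = p (maxn i j).
  by case: (leqP i j) => ij; [apply/maxn_idPr | apply/maxn_idPl]; rewrite leq_p ?(ltnW ij).
have min_p i j : minn (p i) (p j) = p (minn i j).
  by case: (leqP i j) => ij; [apply/minn_idPl | apply/minn_idPr]; rewrite leq_p ?(ltnW ij).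
apply: block_norm_lub => _ [[i [l ->]] | [i ->]]; rewrite proj_proj max_p min_p.
  by apply: block_norm_ub; left; exists (maxn i m), (minn l k).
have [/andP[mi ik] | iNmk] := boolP (m <= i < k)%N.
  by rewrite (maxn_idPl mi) (minn_idPl ik); apply: block_norm_ub; right; exists i.
rewrite proj_ge ?normr0 ?mul0r ?block_norm_ge0 // leq_p geq_min !leq_max.
by case/nandP: iNmk; rewrite -ltnNge ?ltnS => ->; rewrite ?orbT.
Qed.

Lemma norm_le_block_norm x : closed_span w x -> `|x| <= C * block_norm x.
Proof.
move=> wx; apply/ler_addgt0Pr => e e_gt0.
have /cvgrPdist_lt/(_ e e_gt0) [n _ xn] := proj_head_cvg x.
have head : proj 0 (p n) x = proj (p 0) (p n) x.
  by rewrite -(proj_cat _ _ (p 0)) ?leq_p //= proj_head_span // add0r.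
apply: le_trans (_ : _ <= `|x - proj 0 (p n) x| + `|proj 0 (p n) x|) _.
  by rewrite -{1}(subrK (proj 0 (p n) x) x) ler_normD.
rewrite addrC lerD //; first by rewrite head norm_proj_le_block_norm.
exact: ltW (xn n (leqnn n)).
Qed.

Lemma block_norm_expansion x : closed_span w x ->
  series_to_N block_norm (fun i => coef x (jj i) / b (jj i)) w x.
Proof.
move=> wx; apply/cvgrPdist_lt => e e_gt0.
have /cvgrPdist_lt/(_ e e_gt0) := proj_head_cvg x.
apply: filterS => n xn.
rewrite block_partial_sum // sub0r normrN ger0_norm ?block_norm_ge0 //.
exact: le_lt_trans (block_norm_le_norm _) xn.
Qed.

Lemma block_norm_expansion_coef {a x} : series_to_N block_norm a w x ->
  forall i, a i *: w i = proj (p i) (p i.+1) x.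
Proof.
move=> ax i; apply/eqP; rewrite eq_sym -subr_eq0 -normr_le0.
apply/ler_addgt0Pr => e e_gt0; rewrite add0r.
have /cvgrPdist_lt/(_ (e / `|w i|)) := ax; rewrite divr_gt0 // => /(_ isT) [N0 _ xN].
have i_lt_n : (i < maxn N0 i.+1)%N by rewrite leq_max ltnSn orbT.
rewrite -(proj_block_sum a _ _ i_lt_n) -linearB (le_trans (norm_proj_block_le _ _)) //.
rewrite -ler_pdivlMl // mulrC ltW //.
by have := xN _ (leq_maxl N0 i.+1); rewrite /= sub0r normrN ger0_norm ?block_norm_ge0.
Qed.

Lemma block_norm_signed_sum F : F != fset0 ->
  (forall s, `|signed_sum w F s| <= C) -> forall s, block_norm (signed_sum w F s) = 1.
Proof.
move=> F_neq0 FC s; apply/eqP; rewrite eq_le; apply/andP; split.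
  apply: block_norm_lub => _ [[i [k ->]] | [i ->]].
    by rewrite proj_signed_sum ler_pdivrMr // mul1r norm_signed_sum_mask.
  rewrite proj_block_signed_sum; case: ifP => _; last by rewrite normr0 mul0r ler01.
  by rewrite normrZ normr_sign mul1r divff // lt0r_neq0.
have [i iF] := fset0Pn F F_neq0.
apply: block_norm_ub; right; exists i.
by rewrite proj_block_signed_sum iF normrZ normr_sign mul1r divff // lt0r_neq0.
Qed.

Lemma block_norm_is_norm : is_norm_on (closed_span w) block_norm.
Proof.
split=> [x _ | ]; first exact: block_norm_ge0.
split=> [x wx Nx0 | ].
  by apply/eqP; rewrite -normr_le0 (le_trans (norm_le_block_norm _ wx)) // Nx0 mulr0.
by split=> [x y _ _ | c x _]; [exact: block_normD | exact: block_normZ].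
Qed.

Lemma block_norm_equiv : equiv_norm_on (closed_span w) block_norm.
Proof.
exists C^-1, 1; split; first by rewrite invr_gt0.
split=> [| x wx]; first exact: ltr01.
by rewrite mul1r block_norm_le_norm mulrC ler_pdivrMr // mulrC norm_le_block_norm.
Qed.

Lemma block_norm_basis i : `|w i| <= C -> block_norm (w i) = 1.
Proof.
have w_sum s : signed_sum w [fset i]%fset s = (-1) ^+ s i *: w i.
  by rewrite /signed_sum big_seq_fset1.
move=> wiC; have -> : w i = signed_sum w [fset i]%fset (fun=> false).
  by rewrite w_sum expr0 scale1r.
apply: block_norm_signed_sum => [|s]; first by apply/fset0Pn; exists i; rewrite inE.
by rewrite w_sum normrZ normr_sign mul1r.
Qed.

Lemma block_norm_unique_expansion x : closed_span w x ->
  exists! a, series_to_N block_norm a w x.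
Proof.
move=> wx; exists (fun i => coef x (jj i) / b (jj i)).
split=> [| a ax]; first exact: block_norm_expansion.
apply: funext => i; have := block_norm_expansion_coef ax i.
rewrite proj_block_span // => /eqP; rewrite -subr_eq0 -scalerBl scaler_eq0 subr_eq0.
by rewrite -normr_eq0 (gt_eqF (w_gt0 i)) orbF => /eqP ->.
Qed.

Lemma block_norm_bimonotone a x : series_to_N block_norm a w x ->
  forall m n, (m <= n)%N ->
  block_norm (\sum_(m <= i < n.+1) a i *: w i) <= block_norm x.
Proof.
move=> ax m n mn; under eq_bigr do rewrite (block_norm_expansion_coef ax).
by rewrite proj_telescope ?(leqW mn) // block_norm_proj.
Qed.

End BlockBasis.

Theorem mainTheorem9 (R : realType) (V : completeNormedModType R)
  (C : R) (z w : nat -> V) :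
  is_basis z -> bimonotone z ->
  block_basis_of w z ->
  (forall i, 1 <= `|w i| /\ `|w i| <= C) ->
  exists N : V -> R,
    is_norm_on (closed_span w) N /\
    equiv_norm_on (closed_span w) N /\
    (forall i, N (w i) = 1) /\
    (forall x, closed_span w x -> exists! a : nat -> R, series_to_N N a w x) /\
    (forall x (a : nat -> R), closed_span w x -> series_to_N N a w x ->
       forall m n : nat, (m <= n)%N ->
         N (\sum_(m <= i < n.+1) a i *: w i) <= N x) /\
    (forall F : {fset nat}, F != fset0 ->
       (forall s : nat -> bool, `|signed_sum w F s| <= C) ->
       forall s : nat -> bool, N (signed_sum w F s) = 1).
Proof.
move=> basis_z bimonotone_z [p [b [p_incr [w_def w_neq0]]]] w_bounds.
have w_ge1 i : 1 <= `|w i| by case: (w_bounds i).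
have C_ge1 : 1 <= C by case: (w_bounds 0%N); apply: le_trans.
have [jj jjP] := choice (fun i => block_support w_def i (w_neq0 i)).
have jj_block i := (jjP i).1; have b_jj i := (jjP i).2.
exists (block_norm (w := w) (p := p) basis_z C); split; first exact: block_norm_is_norm.
split; first exact: block_norm_equiv.
split; first by move=> i; apply: block_norm_basis => //; case: (w_bounds i).
split; first exact: block_norm_unique_expansion.
split; first by move=> x a _; apply: block_norm_bimonotone.
exact: block_norm_signed_sum.
Qed.
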